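(* If $f\ge 0$ is a random variable, then its quantization $\widehat f$ is a positive operator on $H$, i.e. $\langle\widehat f u,u\rangle\ge 0$ for all $u\in H$.
   Context: $(\Omega,\mathcal{A},\nu)$ is a probability space and $H=L_2(\Omega,\mathcal{A},\nu)$ is the complex Hilbert space with inner product $\langle f,g\rangle=\int\bar f g\,d\nu$. A random variable is a real-valued $f\in H$. For a random variable $f\ge 0$, its quantization $\widehat f$ is the operator on $H$ given by $(\widehat f u)(y)=\int\min[f(x),f(y)]\,u(x)\,d\nu(x)$. *)

From HB Require Import structures.
From mathcomp Require Import all_boot all_order all_algebra.
From mathcomp Require Import all_classical all_reals all_analysis.
From mathcomp Require Import complex.
Set Implicit Arguments. Unset Strict Implicit. Unset Printing Implicit Defensive.
Import Order.TTheory GRing.Theory Num.Theory.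
Local Open Scope ring_scope.
Local Open Scope classical_set_scope.

Section Defs.
Context {d : measure_display} {T : measurableType d} {R : realType}.
Variable P : probability T R.

Definition cintegral (g : T -> R[i]) : R[i] :=
  Complex (Rintegral P setT (fun x => complex.Re (g x)))
          (Rintegral P setT (fun x => complex.Im (g x))).

(* u : Omega -> C represents an element of H = L_2(Omega, A, nu) (complex). *)
Definition L2c (u : T -> R[i]) : Prop :=
  measurable_fun setT (fun x => complex.Re (u x)) /\
  measurable_fun setT (fun x => complex.Im (u x)) /\
  P.-integrable setT (fun x => ((complex.Re (u x)) ^+ 2 + (complex.Im (u x)) ^+ 2)%:E).

Definition real_rv_L2 (f : T -> R) : Prop :=
  measurable_fun setT f /\ P.-integrable setT (fun x => (f x ^+ 2)%:E).

Definition cinner (g u : T -> R[i]) : R[i] :=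
  cintegral (fun y => conjc (g y) * u y).

Definition quantization (f : T -> R) (u : T -> R[i]) : T -> R[i] :=
  fun y => cintegral (fun x => Complex (Num.min (f x) (f y)) 0 * u x).

End Defs.

From HB Require Import structures.
From mathcomp Require Import all_boot all_order all_algebra.
From mathcomp Require Import all_classical all_reals all_analysis.
From mathcomp Require Import complex.
From mathcomp Require Import ring lra.
Set Implicit Arguments. Unset Strict Implicit. Unset Printing Implicit Defensive.
Import Order.TTheory GRing.Theory Num.Theory measurable_realfun.
Local Open Scope ring_scope.
Local Open Scope classical_set_scope.

(* Layer-cake: for a, b >= 0, min(a, b) is the Lebesgue integral over t of
   1[0 <= t < a] 1[0 <= t < b].  Hence, by Fubini, for real g,
     \int\int min(f x, f y) g x g y = \int_t (\int_x 1[0 <= t < f x] g x)^2 >= 0.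
   For u = a + i b, the real part of <hat f u, u> is the sum of these forms for
   a and for b, and its imaginary part vanishes because the kernel
   min(f x, f y) is symmetric. *)

Section real_inequalities.
Variable R : realFieldType.
Implicit Types a b c e : R.

Lemma normr_le_1Dsqr a : `|a| <= 1 + a ^+ 2.
Proof. by rewrite -real_normK ?num_real //; have := normr_ge0 a; nra. Qed.

Lemma norm_mul_le_sqrD a b : `|a * b| <= a ^+ 2 + b ^+ 2.
Proof.
rewrite normrM -[a ^+ 2]real_normK ?num_real // -[b ^+ 2]real_normK ?num_real //.
by have := normr_ge0 a; have := normr_ge0 b; nra.
Qed.

Lemma norm_min_mul_le a b c : `|Num.min a b * c| <= a ^+ 2 + c ^+ 2 + b ^+ 2.
Proof.
have := norm_mul_le_sqrD a c; have := norm_mul_le_sqrD b c.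
by have := sqr_ge0 a; have := sqr_ge0 b; rewrite /Num.min; case: ifP => _; lra.
Qed.

Lemma norm_min_mul_mul_le a b c e :
  `|Num.min a b * c * e| <= `|e| * `|a * c| + `|b * e| * `|c|.
Proof.
rewrite /Num.min; case: ifP => _.
- rewrite (_ : `|a * c * e| = `|e| * `|a * c|); last by rewrite !normrM; ring.
  by rewrite lerDl mulr_ge0.
- rewrite (_ : `|b * c * e| = `|b * e| * `|c|); last by rewrite !normrM; ring.
  by rewrite lerDr mulr_ge0.
Qed.

End real_inequalities.

Lemma conjc_Complex_mul (R : rcfType) (p q : R) (z : R[i]) :
  conjc (Complex p q) * z =
  Complex (p * complex.Re z + q * complex.Im z) (p * complex.Im z - q * complex.Re z).
Proof. by case: z => a b /=; congr Complex; ring. Qed.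

Section square_integrable.
Context d (T : measurableType d) (R : realType).
Variable mu : {finite_measure set T -> \bar R}.

Lemma sqr_integrable_integrable (h : T -> R) : measurable_fun setT h ->
  mu.-integrable setT (fun x => (h x ^+ 2)%:E) -> mu.-integrable setT (EFin \o h).
Proof.
move=> mh ih.
apply: (le_integrable measurableT (g := fun x => (1 + h x ^+ 2)%:E)).
- exact/measurable_EFinP.
- move=> x _; rewrite /= lee_fin [X in _ <= X]ger0_norm ?addr_ge0 ?sqr_ge0 //.
  exact: normr_le_1Dsqr.
- have := integrableD measurableT (finite_measure_integrable_cst mu 1 measurableT) ih.
  by apply: eq_integrable => // x _; rewrite /= EFinD.
Qed.

Lemma sqr_integrable_mul (h k : T -> R) : measurable_fun setT h -> measurable_fun setT k ->
  mu.-integrable setT (fun x => (h x ^+ 2)%:E) ->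
  mu.-integrable setT (fun x => (k x ^+ 2)%:E) ->
  mu.-integrable setT (fun x => (h x * k x)%:E).
Proof.
move=> mh mk ih ik.
apply: (le_integrable measurableT (g := fun x => (h x ^+ 2 + k x ^+ 2)%:E)).
- by apply/measurable_EFinP; exact: measurable_funM.
- move=> x _; rewrite /= lee_fin [X in _ <= X]ger0_norm ?addr_ge0 ?sqr_ge0 //.
  exact: norm_mul_le_sqrD.
- have := integrableD measurableT ih ik.
  by apply: eq_integrable => // x _; rewrite /= EFinD.
Qed.

Lemma sqrD_integrable (a b : T -> R) : measurable_fun setT a -> measurable_fun setT b ->
  mu.-integrable setT (fun x => (a x ^+ 2 + b x ^+ 2)%:E) ->
  mu.-integrable setT (fun x => (a x ^+ 2)%:E) /\
  mu.-integrable setT (fun x => (b x ^+ 2)%:E).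
Proof.
move=> ma mb iab; split; apply: (le_integrable measurableT _ _ iab).
- by apply/measurable_EFinP; exact: measurable_funX.
- by move=> x _; rewrite /= lee_fin !ger0_norm ?addr_ge0 ?sqr_ge0 // lerDl sqr_ge0.
- by apply/measurable_EFinP; exact: measurable_funX.
- by move=> x _; rewrite /= lee_fin !ger0_norm ?addr_ge0 ?sqr_ge0 // lerDr sqr_ge0.
Qed.

End square_integrable.

Lemma integrable_prod_mul d1 d2 (T1 : measurableType d1) (T2 : measurableType d2)
    (R : realType) (mu : {sigma_finite_measure set T1 -> \bar R})
    (nu : {sigma_finite_measure set T2 -> \bar R}) (a : T1 -> R) (b : T2 -> R) :
  measurable_fun setT a -> measurable_fun setT b ->
  mu.-integrable setT (EFin \o a) -> nu.-integrable setT (EFin \o b) ->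
  (mu \x nu)%E.-integrable setT (fun p => (a p.1 * b p.2)%:E).
Proof.
move=> ma mb ia ib.
have mab : measurable_fun setT (fun p : T1 * T2 => (a p.1 * b p.2)%:E).
  apply/measurable_EFinP; apply: measurable_funM.
  - exact: measurableT_comp ma measurable_fst.
  - exact: measurableT_comp mb measurable_snd.
apply/(integrable12ltyP mu nu mab) => /=.
have fa := integrable_fin_num measurableT (integrable_abse ia).
have fb := integrable_fin_num measurableT (integrable_abse ib).
under eq_integral => x _.
  under eq_integral do rewrite normrM EFinM.
  rewrite integralZl //; last exact: integrable_abse ib.
  rewrite -(fineK fb) -EFinM.
  over.
under eq_integral do rewrite /= EFinM.
rewrite integralZr //; last exact: integrable_abse ia.
by rewrite -(fineK fa) -EFinM ltry.
Qed.

Section real_quantization.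
Context d (T : measurableType d) (R : realType).
Variables (P : probability T R) (f : T -> R).
Hypotheses (mf : measurable_fun setT f) (if2 : P.-integrable setT (fun x => (f x ^+ 2)%:E)).

Definition rquantization (g : T -> R) (y : T) : R :=
  Rintegral P setT (fun x => Num.min (f x) (f y) * g x).

Lemma integrable_min_mul (g : T -> R) y : measurable_fun setT g ->
  P.-integrable setT (fun x => (g x ^+ 2)%:E) ->
  P.-integrable setT (fun x => (Num.min (f x) (f y) * g x)%:E).
Proof.
move=> mg ig2.
apply: (le_integrable measurableT (g := fun x => (f x ^+ 2 + g x ^+ 2 + f y ^+ 2)%:E)).
- apply/measurable_EFinP; apply: measurable_funM => //.
  by apply: measurable_minr => //; exact: measurable_cst.
- move=> x _; rewrite /= lee_fin [X in _ <= X]ger0_norm ?addr_ge0 ?sqr_ge0 //.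
  exact: norm_min_mul_le.
- have := integrableD measurableT (integrableD measurableT if2 ig2)
    (finite_measure_integrable_cst P (f y ^+ 2) measurableT).
  by apply: eq_integrable => // x _; rewrite /= !EFinD.
Qed.

Lemma rquantization_mulrE (g h : T -> R) y : measurable_fun setT g ->
  P.-integrable setT (fun x => (g x ^+ 2)%:E) ->
  (rquantization g y * h y)%:E = (\int[P]_x (Num.min (f x) (f y) * g x * h y)%:E)%E.
Proof.
move=> mg ig2; have igy := integrable_min_mul y mg ig2.
rewrite /rquantization /Rintegral EFinM fineK ?(integrable_fin_num measurableT igy) //.
under [RHS]eq_integral do rewrite EFinM.
by rewrite integralZr.
Qed.

Variables g h : T -> R.
Hypotheses (mg : measurable_fun setT g) (ig2 : P.-integrable setT (fun x => (g x ^+ 2)%:E)).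
Hypotheses (mh : measurable_fun setT h) (ih2 : P.-integrable setT (fun x => (h x ^+ 2)%:E)).

Lemma integrable_min_kernel : (P \x P)%E.-integrable setT
  (fun p : T * T => (Num.min (f p.2) (f p.1) * g p.2 * h p.1)%:E).
Proof.
have mnorm (a : T -> R) : measurable_fun setT a -> measurable_fun setT (fun x => `|a x|).
  by move=> ma; exact: measurableT_comp (@normr_measurable R setT) ma.
have iabs (a : T -> R) : P.-integrable setT (EFin \o a) ->
    P.-integrable setT (EFin \o (fun x => `|a x|)).
  by move/integrable_abse; apply: eq_integrable.
have mfg := measurable_funM mf mg; have mfh := measurable_funM mf mh.
have i1 := integrable_prod_mul (mnorm _ mh) (mnorm _ mfg)
  (iabs _ (sqr_integrable_integrable mh ih2)) (iabs _ (sqr_integrable_mul mf mg if2 ig2)).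
have i2 := integrable_prod_mul (mnorm _ mfh) (mnorm _ mg)
  (iabs _ (sqr_integrable_mul mf mh if2 ih2)) (iabs _ (sqr_integrable_integrable mg ig2)).
apply: (le_integrable measurableT _ _ (integrableD measurableT i1 i2)).
- apply/measurable_EFinP; apply: measurable_funM; last exact: measurableT_comp mh measurable_fst.
  apply: measurable_funM; last exact: measurableT_comp mg measurable_snd.
  apply: measurable_minr.
  + exact: measurableT_comp mf measurable_snd.
  + exact: measurableT_comp mf measurable_fst.
- move=> [x y] _; rewrite /= lee_fin [X in _ <= X]ger0_norm ?addr_ge0 ?mulr_ge0 //.
  exact: norm_min_mul_mul_le.
Qed.

Lemma integrable_rquantization_mul : P.-integrable setT (fun y => (rquantization g y * h y)%:E).
Proof.
have := integrable_fubini_F integrable_min_kernel.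
by apply: eq_integrable => // y _; rewrite /fubini_F /= rquantization_mulrE.
Qed.

Lemma rquantization_formC :
  Rintegral P setT (fun y => rquantization g y * h y) =
  Rintegral P setT (fun x => rquantization h x * g x).
Proof.
rewrite /Rintegral; congr fine.
under eq_integral do rewrite rquantization_mulrE //.
under [RHS]eq_integral do rewrite rquantization_mulrE //.
rewrite (Fubini integrable_min_kernel) /=.
apply: eq_integral => x _; apply: eq_integral => y _.
by rewrite minC; congr (_%:E); ring.
Qed.

End real_quantization.

Section layer_cake.
Context d (T : measurableType d) (R : realType).
Variable mu : {sigma_finite_measure set T -> \bar R}.
Variable F : T -> R.
Hypotheses (mF : measurable_fun setT F) (F_ge0 : forall x, 0 <= F x).

Let lambda := @lebesgue_measure R.

Definition layer (x : T) (t : R) : R := \1_(`[0, F x[) t.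

Lemma layer_ge0 x t : 0 <= layer x t.
Proof. by rewrite /layer indicE. Qed.

Lemma layer_le1 x t : layer x t <= 1.
Proof. by rewrite /layer indicE; case: (_ \in _). Qed.

Lemma measurable_layer : measurable_fun setT (fun p : T * R => layer p.1 p.2).
Proof.
have -> : (fun p : T * R => layer p.1 p.2) =
    \1_([set p | 0 <= p.2] `&` [set p | p.2 < F p.1]).
  apply/funext => p; rewrite /layer !indicE; congr ((nat_of_bool _)%:R).
  apply/idP/idP.
  - by move/set_mem; rewrite /= in_itv /= => /andP[h1 h2]; apply/mem_set.
  - by move/set_mem => [h1 h2]; apply/mem_set; rewrite /= in_itv /= h1 h2.
apply: measurable_indic; apply: measurableI.
- have := @measurable_fun_ler _ _ _ setT (fun _ => 0) snd (measurable_cst (0 : R))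
    (@measurable_snd _ _ T R) measurableT [set true] I.
  rewrite setTI; congr (measurable _); apply/seteqP; split => p /=; by [move=> ->|].
- have := @measurable_fun_ltr _ _ _ setT snd (fun p => F p.1) (@measurable_snd _ _ T R)
    (measurableT_comp mF measurable_fst) measurableT [set true] I.
  rewrite setTI; congr (measurable _); apply/seteqP; split => p /=; by [move=> ->|].
Qed.

Lemma measurable_layer_at x : measurable_fun setT (layer x).
Proof. by apply: measurable_indic; exact: measurable_itv. Qed.

Lemma measurable_layer_level t : measurable_fun setT (fun x => layer x t).
Proof.
have mpair : measurable_fun setT (fun x : T => (x, t)).
  by apply/measurable_fun_pairP; split; [exact: measurable_id | exact: measurable_cst].
exact: measurableT_comp measurable_layer mpair.
Qed.

Lemma integral_layer_mul x y :
  (\int[lambda]_t (layer x t * layer y t)%:E = (Num.min (F x) (F y))%:E)%E.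
Proof.
have -> : (fun t => (layer x t * layer y t)%:E) =
    (fun t => (\1_(`[0, Num.min (F x) (F y)[) t)%:E).
  apply/funext => t; rewrite /layer; congr (_%:E).
  rewrite -[LHS]/((\1_`[0, F x[ \* \1_`[0, F y[) t) -indicI; congr (\1_ _ t).
  apply/seteqP; split => s /=; rewrite !in_itv /=.
  - by move=> [/andP[-> h1] /andP[_ h2]]; rewrite lt_min h1 h2.
  - by rewrite lt_min => /andP[-> /andP[-> ->]].
rewrite (@integral_indic _ _ _ lambda setT measurableT); last exact: measurable_itv.
rewrite setIT /lambda; apply: eq_trans (lebesgue_measure_itv _) _ => /=.
have min_ge0 : 0 <= Num.min (F x) (F y) by rewrite le_min !F_ge0.
case: ifPn => [_|]; first by rewrite oppr0 adde0.
by rewrite -leNgt lee_fin => min_le0; congr (_%:E); apply/eqP; rewrite eq_le min_ge0.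
Qed.

Lemma integral_layer x : (\int[lambda]_t (layer x t)%:E = (F x)%:E)%E.
Proof.
rewrite -[in RHS](minxx (F x)) -integral_layer_mul.
apply: eq_integral => t _; congr (_%:E).
by rewrite /layer indicE; case: (_ \in _); rewrite ?mulr1 ?mulr0.
Qed.

Lemma integrable_layer_mul x y : lambda.-integrable setT (fun t => (layer x t * layer y t)%:E).
Proof.
apply/integrableP; split.
  by apply/measurable_EFinP; apply: measurable_funM; exact: measurable_layer_at.
under eq_integral do rewrite gee0_abs ?lee_fin ?mulr_ge0 ?layer_ge0 //.
by rewrite integral_layer_mul ltry.
Qed.

Variable g : T -> R.
Hypotheses (mg : measurable_fun setT g) (ig : mu.-integrable setT (EFin \o g)).
Hypothesis iFg : mu.-integrable setT (fun x => (F x * g x)%:E).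

Lemma integrable_layer_g : (mu \x lambda)%E.-integrable setT
  (fun p : T * R => (layer p.1 p.2 * g p.1)%:E).
Proof.
have mlg : measurable_fun setT (fun p : T * R => (layer p.1 p.2 * g p.1)%:E).
  apply/measurable_EFinP; apply: measurable_funM; first exact: measurable_layer.
  exact: measurableT_comp mg measurable_fst.
apply/(integrable12ltyP mu lambda mlg) => /=.
under eq_integral => x _.
  under eq_integral do rewrite normrM (ger0_norm (layer_ge0 _ _)) EFinM.
  rewrite ge0_integralZr //=; first last.
  - by move=> t _; rewrite lee_fin layer_ge0.
  - by apply/measurable_EFinP; exact: measurable_layer_at.
  rewrite integral_layer -EFinM -(ger0_norm (F_ge0 x)) -normrM.
  over.
by move/integrableP : iFg => [_]; apply: le_lt_trans; rewrite le_eqVlt eqxx.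
Qed.

Lemma integrable_layer_level_mul t : mu.-integrable setT (fun x => (layer x t * g x)%:E).
Proof.
apply: (le_integrable measurableT _ _ ig).
  by apply/measurable_EFinP; apply: measurable_funM => //; exact: measurable_layer_level.
move=> x _; rewrite /= lee_fin normrM (ger0_norm (layer_ge0 _ _)).
by rewrite ler_piMl ?layer_le1.
Qed.

Definition layer_integral (t : R) : \bar R := (\int[mu]_x (layer x t * g x)%:E)%E.

Lemma layer_integral_fin_num t : layer_integral t \is a fin_num.
Proof. exact: integrable_fin_num (integrable_layer_level_mul t). Qed.

Lemma measurable_layer_integral : measurable_fun setT layer_integral.
Proof. exact: measurable_fubini_G integrable_layer_g. Qed.

Let norm1_g := fine (\int[mu]_x `|g x|%:E)%E.

Lemma abse_layer_integral_le t : (`|layer_integral t| <= norm1_g%:E)%E.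
Proof.
have mlg : measurable_fun setT (fun x => (layer x t * g x)%:E).
  by apply/measurable_EFinP; apply: measurable_funM => //; exact: measurable_layer_level.
rewrite /norm1_g fineK ?(integrable_fin_num measurableT (integrable_abse ig)) //.
apply: le_trans (le_abse_integral _ _ mlg) _ => //.
apply: ge0_le_integral => //.
- exact: measurableT_comp mlg.
- by apply/measurable_EFinP; exact: measurableT_comp.
- move=> x _; rewrite /= lee_fin normrM (ger0_norm (layer_ge0 _ _)).
  by rewrite ler_piMl ?layer_le1.
Qed.

Lemma integrable_layer_layer_g y : (mu \x lambda)%E.-integrable setT
  (fun p : T * R => (layer p.1 p.2 * layer y p.2 * (g p.1 * g y))%:E).
Proof.
apply: (le_integrable measurableT _ _ (integrableZr measurableT (g y) integrable_layer_g)).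
  apply/measurable_EFinP; apply: measurable_funM; last apply: measurable_funM.
  - apply: measurable_funM; first exact: measurable_layer.
    exact: measurableT_comp (measurable_layer_at y) measurable_snd.
  - exact: measurableT_comp mg measurable_fst.
  - exact: measurable_cst.
move=> [x t] _; rewrite /= lee_fin !normrM !(ger0_norm (layer_ge0 _ _)).
rewrite [layer x t * layer y t]mulrC -!mulrA ler_piMl ?layer_le1 //.
by rewrite !mulr_ge0 ?layer_ge0.
Qed.

Lemma integral_min_kernel_layer y :
  (\int[mu]_x (Num.min (F x) (F y) * g x * g y)%:E =
   \int[lambda]_t (layer_integral t * (layer y t * g y)%:E))%E.
Proof.
transitivity (\int[mu]_x \int[lambda]_t (layer x t * layer y t * (g x * g y))%:E)%E.
  apply: eq_integral => x _.
  under [RHS]eq_integral do rewrite EFinM.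
  by rewrite integralZr ?integrable_layer_mul // integral_layer_mul -EFinM mulrA.
rewrite (Fubini (integrable_layer_layer_g y)); apply: eq_integral => t _.
rewrite /layer_integral -integralZr //; last exact: integrable_layer_level_mul.
by apply: eq_integral => x _; rewrite -EFinM; congr (_%:E); ring.
Qed.

Lemma integrable_layer_integral_mul : (mu \x lambda)%E.-integrable setT
  (fun p : T * R => layer_integral p.2 * (layer p.1 p.2 * g p.1)%:E)%E.
Proof.
apply: (le_integrable measurableT _ _ (integrableZr measurableT norm1_g integrable_layer_g)).
  apply: emeasurable_funM.
    exact: measurableT_comp measurable_layer_integral measurable_snd.
  apply/measurable_EFinP; apply: measurable_funM; first exact: measurable_layer.
  exact: measurableT_comp mg measurable_fst.
have norm1_g_ge0 : 0 <= norm1_g by rewrite fine_ge0 // integral_ge0.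
move=> [x t] _; rewrite /= abseM (normrM _ norm1_g) (ger0_norm norm1_g_ge0).
rewrite (mulrC _ norm1_g) [X in (_ <= X)%E]EFinM.
by apply: lee_pmul => //; exact: abse_layer_integral_le.
Qed.

Lemma min_kernel_form_ge0 :
  (0 <= \int[mu]_y \int[mu]_x (Num.min (F x) (F y) * g x * g y)%:E)%E.
Proof.
under eq_integral do rewrite integral_min_kernel_layer.
rewrite (Fubini integrable_layer_integral_mul); apply: integral_ge0 => t _.
rewrite /= -(fineK (layer_integral_fin_num t)) integralZl //; last exact: integrable_layer_level_mul.
by rewrite -/(layer_integral t) fineK ?layer_integral_fin_num // -expe2 sqre_ge0.
Qed.

End layer_cake.

Lemma rquantization_form_ge0 d (T : measurableType d) (R : realType)
    (P : probability T R) (f g : T -> R) :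
  measurable_fun setT f -> P.-integrable setT (fun x => (f x ^+ 2)%:E) ->
  {ae P, forall x, 0 <= f x} ->
  measurable_fun setT g -> P.-integrable setT (fun x => (g x ^+ 2)%:E) ->
  0 <= Rintegral P setT (fun y => rquantization P f g y * g y).
Proof.
move=> mf if2 f_ge0 mg ig2.
pose F x := Num.max (f x) 0.
have mF : measurable_fun setT F by apply: measurable_maxr => //; exact: measurable_cst.
have F_ge0 x : 0 <= F x by rewrite le_max lexx orbT.
have iF2 : P.-integrable setT (fun x => (F x ^+ 2)%:E).
  apply: (le_integrable measurableT _ _ if2).
    by apply/measurable_EFinP; exact: measurable_funX.
  move=> x _; rewrite /= lee_fin !ger0_norm ?sqr_ge0 // /F maxEge.
  by case: ifP => // _; rewrite expr0n /= sqr_ge0.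
have ae_fF : {ae P, forall x, f x = F x} by apply: filterS f_ge0 => x fx0; rewrite /F max_l.
have -> : Rintegral P setT (fun y => rquantization P f g y * g y) =
          Rintegral P setT (fun y => rquantization P F g y * g y).
  rewrite /Rintegral; congr fine; apply: ae_eq_integral => //.
  - exact: measurable_int (integrable_rquantization_mul mf if2 mg ig2 mg ig2).
  - exact: measurable_int (integrable_rquantization_mul mF iF2 mg ig2 mg ig2).
  move: (ae_fF); apply: filterS => y fFy _; congr (_ * _)%:E.
  rewrite /rquantization /Rintegral; congr fine; apply: ae_eq_integral => //.
  - exact: measurable_int (integrable_min_mul mf if2 y mg ig2).
  - exact: measurable_int (integrable_min_mul mF iF2 y mg ig2).
  by apply: filterS ae_fF => x fFx _; rewrite fFx fFy.
rewrite /Rintegral; apply: fine_ge0.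
under eq_integral do rewrite rquantization_mulrE //.
apply: min_kernel_form_ge0 => //.
- exact: sqr_integrable_integrable.
- exact: sqr_integrable_mul.
Qed.

Lemma quantizationE d (T : measurableType d) (R : realType) (P : probability T R)
    (f : T -> R) (u : T -> R[i]) :
  quantization P f u = fun y =>
    Complex (rquantization P f (fun x => complex.Re (u x)) y)
            (rquantization P f (fun x => complex.Im (u x)) y).
Proof.
apply/funext => y; rewrite /quantization /cintegral /rquantization.
by congr Complex; apply: eq_Rintegral => x _ /=; case: (u x) => p q /=; ring.
Qed.

Theorem theorem3p2 (d : measure_display) (T : measurableType d) (R : realType)
    (P : probability T R) (f : T -> R) :
  real_rv_L2 P f ->
  {ae P, forall x, 0 <= f x} ->
  forall u : T -> R[i], L2c P u ->
    0 <= cinner P (quantization P f u) u.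
Proof.
move=> [mf if2] f_ge0 u [ma [mb iab]].
have [ia2 ib2] := sqrD_integrable ma mb iab.
have iq := integrable_rquantization_mul mf if2.
rewrite /cinner quantizationE /cintegral.
under [X in Complex X _]eq_Rintegral do rewrite conjc_Complex_mul /=.
under [X in Complex _ X]eq_Rintegral do rewrite conjc_Complex_mul /=.
rewrite lecE /=.
rewrite (RintegralB measurableT (iq _ _ ma ia2 mb ib2) (iq _ _ mb ib2 ma ia2)).
rewrite (RintegralD measurableT (iq _ _ ma ia2 ma ia2) (iq _ _ mb ib2 mb ib2)).
rewrite rquantization_formC // subrr eqxx /=.
by rewrite addr_ge0 // rquantization_form_ge0.
Qed.
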